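(* Let $m$ be a positive integer, $r$ an odd prime, and $p\ge 3$ a prime which is a primitive root modulo $r^m$. Let $q=p^{\phi(r^m)}$ and $f(x)=\mathrm{Tr}_{q/p}\big(x^{(q-1)/r^m}\big)$ for $x\in\mathbb{F}_q$. Then: (i) the partition $\{D^*_{f,i}\}_{i\in f(\mathbb{F}_q^* )}$ induces a $2$-class association scheme if and only if $|f(\mathbb{F}_q^* )|=2$, and this holds if and only if $m=1$ or $r\equiv 1\pmod p$; (ii) the partition $\{D^*_{f,i}\}_{i\in f(\mathbb{F}_q^* )}$ induces a $3$-class association scheme if and only if $|f(\mathbb{F}_q^* )|=3$, and this holds if and only if $m>1$ and $r\not\equiv 1\pmod p$.
   Context: $\phi$ is Euler's function and $\mathrm{Tr}_{q/p}$ the trace from $\mathbb{F}_q$ to $\mathbb{F}_p$. For $i\in\mathbb{F}_p$, $D_{f,i}=\{x\in\mathbb{F}_q:f(x)=i\}$, $D^*_{f,i}=D_{f,i}\setminus\{0\}$, $f(\mathbb{F}_q^* )=\{f(x):x\ne0\}$. Relations on $\mathbb{F}_q$: the diagonal $R_{-1}$, and for $i\in f(\mathbb{F}_q^* )$, $(\alpha,\beta)\in R_i$ iff $\alpha-\beta\in D^*_{f,i}$. The partition induces a $d$-class association scheme if these relations form a symmetric association scheme on $\mathbb{F}_q$ (each relation symmetric, and for any three relations $R_a,R_b,R_c$ the number $|\{w:(u,w)\in R_a,(w,v)\in R_b\}|$ is constant over $(u,v)\in R_c$) and $d=|f(\mathbb{F}_q^* )|$. *)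

From HB Require Import structures.
From mathcomp Require Import all_boot all_order all_algebra all_field.
Set Implicit Arguments. Unset Strict Implicit. Unset Printing Implicit Defensive.
Import GRing.Theory.
Local Open Scope ring_scope.

Definition primitive_root_mod (a n : nat) : Prop :=
  coprime a n /\ (a ^ totient n = 1 %[mod n])%N /\
  (forall k : nat, (0 < k)%N -> (a ^ k = 1 %[mod n])%N -> (totient n <= k)%N).

(* Absolute trace from F (of characteristic p, #|F| = p^n) to its prime field:
   Tr(x) = sum_{i<n} x^(p^i). Its values lie in the prime subfield of F,
   which we identify with F_p. *)
Definition abs_trace (F : finFieldType) (p n : nat) (x : F) : F :=
  \sum_(i < n) x ^+ (p ^ i).

Definition sym_assoc_scheme (T K : finType) (S : {set K}) (R : K -> rel T) : Prop :=
  (forall k, k \in S -> forall x y, R k x y = R k y x) /\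
  (forall a b c, a \in S -> b \in S -> c \in S ->
     forall u v u' v', R c u v -> R c u' v' ->
       #|[set w | R a u w && R b w v]| = #|[set w | R a u' w && R b w v']|).

Definition image_nonzero (F : finFieldType) (f : F -> F) : {set F} :=
  [set f x | x in [set y : F | y != 0]].

(* Index set {-1} ∪ f(F_q^* ), with None standing for the index -1. *)
Definition scheme_index (F : finFieldType) (f : F -> F) : {set option F} :=
  [set k : option F | if k is Some i then i \in image_nonzero f else true].

(* R_{-1} is the diagonal; R_i = {(a,b) : a - b in D^*_{f,i}}. *)
Definition scheme_rel (F : finFieldType) (f : F -> F) (k : option F) : rel F :=
  fun a b => match k with
             | None => a == b
             | Some i => (a - b != 0) && (f (a - b) == i)
             end.

Definition induces_dclass_scheme (F : finFieldType) (f : F -> F) (d : nat) : Prop :=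
  sym_assoc_scheme (scheme_index f) (scheme_rel f) /\ d = #|image_nonzero f|.

From HB Require Import structures.
From mathcomp Require Import all_boot all_order all_algebra all_field.
From mathcomp Require Import cyclic zify.
From mathcomp.algebra_tactics Require Import ring.
Set Implicit Arguments. Unset Strict Implicit. Unset Printing Implicit Defensive.
Import GRing.Theory.
Local Open Scope ring_scope.

(* Let Q = p^(phi(r^m)/2), so that q = Q^2. Since p has order phi(r^m) modulo r^m, r^m divides
   Q + 1, hence (q - 1)/r^m is a multiple of Q - 1 and f(k x) = f(x) for every nonzero k in the
   subfield K = F_Q. As F_q is a K-plane, every class D*_{f,i} is a union of lines through 0
   (with 0 removed). For two such unions A and B, the number of ways to write x = z + w with z
   in A and w in B depends only on whether x lies in A and in B: on the line K x this is clear,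
   and off it a double count over the affine lines k x - z, each meeting every other line
   through 0 exactly once, expresses it through the sizes of A, B and their intersection off
   K x. So the relations always form an association scheme, with |f(F_q minus 0)| classes.
   The element y = x^((q-1)/r^m) runs over the r^m-th roots of unity, and the Frobenius
   conjugates of y are the y^u with u prime to r, so Tr(y) = r^m [y = 1] - r^(m-1) [y^r = 1].
   The values are thus r^m - r^(m-1) and -r^(m-1), and 0 when m > 1; the first one vanishes in
   F_p exactly when r = 1 mod p. *)

Lemma primitive_root_expn_inj a n i j : primitive_root_mod a n ->
  (i < totient n)%N -> (j < totient n)%N -> a ^ i = a ^ j %[mod n] -> i = j.
Proof.
case=> co_an [_ ord_min].
wlog le_ij : i j / (i <= j)%N => [hw|] i_lt j_lt eq_ij.
  case: (leqP i j) => [le|/ltnW le]; first exact: hw.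
  by apply/esym/hw; last apply/esym.
case: (ltngtP i j) => [lt_ij||//]; last by rewrite ltnNge le_ij.
have a_gt0 : (0 < a)%N.
  case: a {eq_ij ord_min} co_an => // /eqP; rewrite gcd0n => n1.
  by move: j_lt lt_ij; rewrite n1 (_ : totient 1 = 1%N) //; lia.
have d_gt0 : (0 < j - i)%N by rewrite subn_gt0.
suff /(ord_min _ d_gt0) : a ^ (j - i) = 1 %[mod n] by lia.
apply/eqP; rewrite eqn_mod_dvd ?expn_gt0 ?a_gt0 // -(Gauss_dvdr _ (_ : coprime n (a ^ i))).
  rewrite mulnBr muln1 -expnD subnKC // -eqn_mod_dvd ?leq_pexp2l //.
  by rewrite eq_sym; apply/eqP.
by rewrite coprime_sym coprimeXl.
Qed.

Lemma sum_primitive_root_mod (R : nmodType) a n (G : nat -> R) : (0 < n)%N ->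
  primitive_root_mod a n ->
  \sum_(i < totient n) G (a ^ i %% n)%N = \sum_(u < n | coprime u n) G u.
Proof.
move=> n_gt0 a_prim.
pose h (i : 'I_(totient n)) : 'I_n := Ordinal (ltn_pmod (a ^ i) n_gt0).
have h_inj : injective h.
  by move=> i j /(congr1 val)/= /(primitive_root_expn_inj a_prim (ltn_ord i) (ltn_ord j))/val_inj.
have h_im : h @: setT = [set u : 'I_n | coprime u n].
  apply/eqP; rewrite eqEcard; apply/andP; split.
    apply/subsetP => _ /imsetP[i _ ->]; rewrite inE /= coprime_modl coprimeXl //.
    by case: a_prim.
  rewrite card_imset // cardsT card_ord totient_count_coprime big_mkord -sum1_card.
  by rewrite big_mkcond leq_sum // => u _; rewrite inE coprime_sym; case: coprime.
transitivity (\sum_(u in h @: setT) G u); last by apply: eq_bigl => u; rewrite h_im inE.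
rewrite big_imset /= => [|i j _ _ /h_inj //].
by apply: eq_bigl => i; rewrite inE.
Qed.

Lemma sum_ord_dvdn (R : nmodType) r N (G : nat -> R) : (0 < r)%N -> (r %| N)%N ->
  \sum_(u < N | (r %| u)%N) G u = \sum_(j < N %/ r) G (r * j)%N.
Proof.
move=> r_gt0 /dvdnP[M ->]; rewrite mulnK //.
have mul_lt (j : 'I_M) : (r * j < M * r)%N by rewrite mulnC ltn_pmul2r.
have div_lt (u : 'I_(M * r)) : (u %/ r < M)%N by rewrite ltn_divLR.
rewrite (reindex_onto (fun j => Ordinal (mul_lt j)) (fun u => Ordinal (div_lt u))) /=.
  by apply: eq_bigl => j; rewrite dvdn_mulr //=; apply/eqP/val_inj; rewrite /= mulKn.
by move=> u r_u; apply: val_inj; rewrite /= mulnC divnK.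
Qed.

Lemma sum_expr_unity_root (F : fieldType) (y : F) n : y ^+ n = 1 ->
  \sum_(i < n) y ^+ i = if y == 1 then n%:R else 0.
Proof.
move=> yn1; have [->|y1] := eqVneq y 1.
  by rewrite (eq_bigr (fun _ => 1)) ?sumr_const ?card_ord // => i _; rewrite expr1n.
have := subrX1 y n; rewrite yn1 subrr => /esym/eqP.
by rewrite mulf_eq0 subr_eq0 (negbTE y1) => /eqP.
Qed.

Lemma double_half_totient r m : prime r -> odd r -> (0 < m)%N ->
  ((totient (r ^ m))./2).*2 = totient (r ^ m).
Proof.
move=> r_prime r_odd m_gt0; apply: even_halfK.
rewrite totient_pfactor // oddM negb_and; apply/orP; left.
by case: r r_prime r_odd => //= r' _; rewrite negbK.
Qed.

Lemma half_totient_gt0 r m : prime r -> odd r -> (0 < m)%N -> (0 < (totient (r ^ m))./2)%N.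
Proof.
move=> r_prime r_odd m_gt0; rewrite half_gt0 totient_gt1.
apply: leq_trans (odd_prime_gt2 r_odd r_prime) _.
by rewrite -{1}(expn1 r) leq_pexp2l // prime_gt0.
Qed.

(* a^(phi(r^m)/2) is a square root of 1 modulo r^m other than 1; as r is odd, it is -1. *)
Lemma primitive_root_half_totient a r m : prime r -> odd r -> (0 < m)%N ->
  primitive_root_mod a (r ^ m) -> (r ^ m %| a ^ (totient (r ^ m))./2 + 1)%N.
Proof.
move=> r_prime r_odd m_gt0 [co_a [a_phi ord_min]].
set s := (totient (r ^ m))./2.
have s_gt0 : (0 < s)%N := half_totient_gt0 r_prime r_odd m_gt0.
have phiE : totient (r ^ m) = (s + s)%N by rewrite addnn double_half_totient.
have a_gt0 : (0 < a)%N.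
  case: a co_a {a_phi ord_min} => // /eqP; rewrite gcd0n => N1.
  by move: (ltn_exp2l 0 m (prime_gt1 r_prime)); rewrite N1 m_gt0.
have dvd_prod : (r ^ m %| (a ^ s - 1) * (a ^ s + 1))%N.
  have -> : ((a ^ s - 1) * (a ^ s + 1) = a ^ totient (r ^ m) - 1)%N.
    have as_gt0 : (0 < a ^ s)%N by rewrite expn_gt0 a_gt0.
    by rewrite phiE expnD; move: (a ^ s)%N as_gt0 => A; nia.
  by rewrite -eqn_mod_dvd 1?eq_sym ?a_phi // expn_gt0 a_gt0.
have [r_dvd|r_ndvd] := boolP (r %| a ^ s + 1)%N.
  rewrite Gauss_dvdr // in dvd_prod; rewrite coprime_pexpl // prime_coprime //.
  apply/negP => /(dvdn_sub r_dvd); rewrite (_ : a ^ s + 1 - (a ^ s - 1) = 2)%N; last by lia.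
  by move/dvdn_leq => /(_ isT); have := odd_prime_gt2 r_odd r_prime; lia.
suff /(ord_min s s_gt0) : a ^ s = 1 %[mod r ^ m] by rewrite phiE; lia.
apply/eqP; rewrite eqn_mod_dvd ?expn_gt0 ?a_gt0 //.
by rewrite -(Gauss_dvdl _ (_ : coprime (r ^ m) (a ^ s + 1))) // coprime_pexpl // prime_coprime.
Qed.

Lemma double_count (I J : finType) (A : {pred I}) (B : {pred J}) (R : I -> J -> bool) :
  (\sum_(i in A) #|[set j in B | R i j]| = \sum_(j in B) #|[set i in A | R i j]|)%N.
Proof.
have cardE (T : finType) (C : {pred T}) (P : pred T) :
    #|[set t in C | P t]| = (\sum_(t in C) P t)%N.
  rewrite -sum1_card; under eq_bigl do rewrite inE; rewrite big_mkcondr /=.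
  by apply: eq_bigr => t _; case: (P t).
under eq_bigr do rewrite cardE.
by rewrite exchange_big /=; apply: eq_bigr => j _; rewrite cardE.
Qed.

Section SubfieldOfIndexTwo.

Variables (F : finFieldType) (K : {pred F}).
Hypothesis K_divring : divring_closed K.
HB.instance Definition _ := GRing.isDivringClosed.Build F K K_divring.
Hypothesis card_F_le : (#|F| <= #|K| ^ 2)%N.

Let Kstar : {set F} := [set k in K | k != 0].

Lemma card_Kstar_gt0 : (0 < #|Kstar|)%N.
Proof. by apply/card_gt0P; exists 1; rewrite !inE rpred1 oner_eq0. Qed.

Definition line (x : F) : {set F} := [set k * x | k in K].

Definition scale_invariant (C : {set F}) :=
  forall k z, k \in K -> k != 0 -> (k * z \in C) = (z \in C).

Lemma line_scale_invariant x : scale_invariant (line x).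
Proof.
move=> k z Kk k0; apply/imsetP/imsetP => -[l Kl zE].
  exists (l / k); rewrite ?rpredM ?rpredV //.
  by apply: (mulfI k0); rewrite zE mulrA mulrCA mulfV // mulr1.
by exists (k * l); rewrite ?rpredM // zE mulrA.
Qed.

Lemma line_scale x k : k \in K -> k != 0 -> line (k * x) = line x.
Proof.
move=> Kk k0; apply/setP=> z; apply/imsetP/imsetP => -[l Kl ->].
  by exists (l * k); rewrite ?rpredM // mulrA.
by exists (l / k); rewrite ?rpredM ?rpredV // mulrA mulfVK.
Qed.

Lemma card_line_cond x (P : pred F) : x != 0 ->
  #|[set z in line x | P z]| = #|[set k in K | P (k * x)]|.
Proof.
move=> x0; rewrite -[RHS](card_imset _ (mulIf x0)); apply: eq_card => z.
rewrite !inE; apply/andP/imsetP => [[/imsetP[k Kk ->] Pk]|[k]].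
  by exists k; rewrite // inE Kk.
by rewrite inE => /andP[Kk Pk] ->; split=> //; apply: imset_f.
Qed.

Lemma card_setD_line (C : {set F}) x x' : scale_invariant C -> x != 0 -> x' != 0 ->
  (x \in C) = (x' \in C) -> #|C :\: line x| = #|C :\: line x'|.
Proof.
move=> invC x0 x'0 eqC; rewrite !cardsD; congr (_ - _)%N.
have setIE y : C :&: line y = [set z in line y | z \in C].
  by apply/setP=> z; rewrite !inE andbC.
rewrite !setIE !card_line_cond //; apply: eq_card => k; rewrite !inE.
have [->|k0] := eqVneq k 0; first by rewrite !mul0r.
by case: (boolP (k \in K)) => //= Kk; rewrite !invC.
Qed.

Lemma notin_line_indep x z a c : x != 0 -> z \notin line x -> a \in K -> c \in K ->
  a * x + c * z = 0 -> a = 0 /\ c = 0.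
Proof.
move=> x0 zNx Ka Kc axcz.
have c0 : c = 0.
  apply/eqP; apply: contraNT zNx => c0; apply/imsetP.
  exists (- a / c); first by rewrite rpredM ?rpredN ?rpredV.
  apply: (mulfI c0); rewrite mulrA mulrCA mulfV // mulr1 mulNr.
  by apply/eqP; rewrite -addr_eq0 addrC axcz.
by move: axcz; rewrite c0 mul0r addr0 => /eqP; rewrite mulf_eq0 (negbTE x0) orbF => /eqP.
Qed.

Lemma span_notin_line x z b : x != 0 -> z \notin line x ->
  exists a c, [/\ a \in K, c \in K & b = a * x + c * z].
Proof.
move=> x0 zNx.
pose KK := setX [set k in K] [set k in K].
pose comb (ac : F * F) := ac.1 * x + ac.2 * z.
have comb_inj : {in KK &, injective comb}.
  move=> [a c] [a' c']; rewrite !inE /comb /= => /andP[Ka Kc] /andP[Ka' Kc'] eq_comb.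
  suff [/subr0_eq -> /subr0_eq ->] : a - a' = 0 /\ c - c' = 0 by [].
  apply: (notin_line_indep x0 zNx); rewrite ?rpredB //.
  by rewrite !mulrBl addrACA -opprD eq_comb subrr.
have : b \in comb @: KK.
  suff -> : comb @: KK = setT by rewrite inE.
  by apply/eqP; rewrite eqEcard subsetT cardsT card_in_imset // cardsX cardsE.
by case/imsetP => -[a c]; rewrite !inE => /andP[Ka Kc] ->; exists a, c.
Qed.

Lemma affine_notin_line x z k : x != 0 -> z \notin line x -> k \in K ->
  k * x - z \notin line x.
Proof.
move=> x0 zNx Kk; apply/negP => /imsetP[mu Kmu eq_mu].
have eq0 : (k - mu) * x + (-1) * z = 0 by rewrite mulrBl -eq_mu; ring.
have [_ /eqP] := notin_line_indep x0 zNx (rpredB Kk Kmu) (rpredN1 K) eq0.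
by rewrite oppr_eq0 oner_eq0.
Qed.

(* The affine line {k x - z | k in K} meets each line through 0 other than K x exactly once. *)
Lemma card_affine_line_hits (B : {set F}) x z : scale_invariant B -> x != 0 ->
  z \notin line x -> (#|[set k in K | (k * x - z)%R \in B]| * #|Kstar| = #|B :\: line x|)%N.
Proof.
move=> invB x0 zNx; rewrite -cardsX.
pose hit (kl : F * F) := kl.2 * (kl.1 * x - z).
have hit_inj : {in setX [set k in K | k * x - z \in B] Kstar &, injective hit}.
  move=> [k l] [k' l']; rewrite !inE /hit /=.
  move=> /andP[/andP[Kk _] /andP[Kl l0]] /andP[/andP[Kk' _] /andP[Kl' _]] eq_hit.
  have [_ /subr0_eq ll'] : l * k - l' * k' = 0 /\ l' - l = 0.
    apply: (notin_line_indep x0 zNx); rewrite ?rpredB ?rpredM //.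
    have -> : (l * k - l' * k') * x + (l' - l) * z = l * (k * x - z) - l' * (k' * x - z).
      by ring.
    by rewrite eq_hit subrr.
  by move: eq_hit; rewrite ll' => /(mulfI l0)/subIr/(mulIf x0) ->.
rewrite -(card_in_imset hit_inj); apply: eq_card => b; rewrite [in RHS]inE.
apply/imsetP/andP => [[[k l]]|[bNx Bb]].
  rewrite !inE /hit /= => /andP[/andP[Kk kB] /andP[Kl l0]] ->.
  by rewrite line_scale_invariant ?invB ?affine_notin_line.
have [a [c [Ka Kc bE]]] := span_notin_line b x0 zNx.
have c0 : c != 0.
  by apply: contraNneq bNx => c0; rewrite bE c0 mul0r addr0; apply: imset_f.
have hitE : (- c) * ((- a / c) * x - z) = b.
  by rewrite bE; field.
exists (- a / c, - c); last by rewrite /hit /= hitE.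
rewrite !inE /= oppr_eq0 c0 !rpredN rpredM ?rpredN ?rpredV // Kc /=.
by rewrite andbT -(invB (- c)) ?hitE ?rpredN ?oppr_eq0.
Qed.

Definition add_fibre (A B : {set F}) x := [set z | (z \in A) && (x - z \in B)].

Section AddFibre.

Variables A B : {set F}.
Hypotheses (invA : scale_invariant A) (invB : scale_invariant B).

Lemma card_add_fibre_line x x' : x != 0 -> x' != 0 ->
  (x \in A) = (x' \in A) -> (x \in B) = (x' \in B) ->
  #|add_fibre A B x :&: line x| = #|add_fibre A B x' :&: line x'|.
Proof.
move=> x0 x'0 eqA eqB.
have setIE y : add_fibre A B y :&: line y = [set z in line y | (z \in A) && (y - z \in B)].
  by apply/setP => z; rewrite !inE andbC.
rewrite !setIE !card_line_cond //; apply: eq_card => k; rewrite !inE.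
case: (boolP (k \in K)) => //= Kk.
have [->|k0] := eqVneq k 0; first by rewrite !mul0r !subr0 eqB.
rewrite !invA // eqA; congr andb.
have subE y : y - k * y = (1 - k) * y by rewrite mulrBl mul1r.
rewrite !subE; have [->|k1] := eqVneq (1 - k) 0; first by rewrite !mul0r.
by rewrite !invB ?rpredB ?rpred1.
Qed.

Let off x := add_fibre A B x :\: line x.

Lemma card_off_scale x k : k \in K -> k != 0 -> #|off (k * x)| = #|off x|.
Proof.
have card_le y l : l \in K -> l != 0 -> (#|off y| <= #|off (l * y)|)%N.
  move=> Kl l0; rewrite -(card_imset _ (mulfI l0)).
  apply/subset_leq_card/subsetP => _ /imsetP[z + ->]; rewrite !inE.
  case/and3P => zNy zA zB.
  by rewrite line_scale // line_scale_invariant // zNy invA // zA -mulrBr invB.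
move=> Kk k0; apply/eqP; rewrite eqn_leq card_le // andbT.
by rewrite -{2}(mulKf k0 x) card_le ?rpredV ?invr_eq0.
Qed.

(* Count in two ways the pairs (k, z) with z in A off the line K x and k x - z in B. *)
Lemma card_add_fibre_offline x : x != 0 ->
  (#|Kstar| * (#|(A :&: B) :\: line x| + #|Kstar| * #|off x|)
     = #|A :\: line x| * #|B :\: line x|)%N.
Proof.
move=> x0.
have sum_hits : (\sum_(k in K) #|[set z in A :\: line x | (k * x - z)%R \in B]|
                 = #|(A :&: B) :\: line x| + #|Kstar| * #|off x|)%N.
  rewrite (bigD1 0) ?rpred0 //=; congr (_ + _)%N.
    apply: eq_card => z; rewrite !inE mul0r sub0r -mulN1r invB ?rpredN1 ?oppr_eq0 ?oner_eq0 //.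
    by rewrite andbA.
  rewrite -sum_nat_const; apply: eq_big => [k|k /andP[Kk k0]]; first by rewrite !inE andbC.
  rewrite -(card_off_scale x Kk k0); apply: eq_card => z.
  by rewrite /off !inE line_scale // andbA.
rewrite -sum_hits double_count big_distrr -sum_nat_const /=.
apply: eq_bigr => z; rewrite inE => /andP[zNx _].
by rewrite mulnC card_affine_line_hits.
Qed.

Lemma card_add_fibre_eq x x' : x != 0 -> x' != 0 ->
  (x \in A) = (x' \in A) -> (x \in B) = (x' \in B) ->
  #|add_fibre A B x| = #|add_fibre A B x'|.
Proof.
move=> x0 x'0 eqA eqB.
rewrite -(cardsID (line x) (add_fibre A B x)) -(cardsID (line x') (add_fibre A B x')).
rewrite (card_add_fibre_line x0 x'0) //; congr (_ + _)%N.
have invAB : scale_invariant (A :&: B) by move=> k z Kk k0; rewrite !inE invA ?invB.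
have eqAB : (x \in A :&: B) = (x' \in A :&: B) by rewrite !inE eqA eqB.
have := card_add_fibre_offline x0; have := card_add_fibre_offline x'0.
rewrite (card_setD_line invA x0 x'0) // (card_setD_line invB x0 x'0) //.
rewrite (card_setD_line invAB x0 x'0) // => <- /eqP.
have Kstar_neq0 := gtn_eqF card_Kstar_gt0.
by rewrite eqn_mul2l Kstar_neq0 eqn_add2l eqn_mul2l Kstar_neq0 => /eqP.
Qed.

End AddFibre.

Variable f : F -> F.
Hypothesis f_scale : forall k z, k \in K -> k != 0 -> f (k * z) = f z.

Let rel_class a := [set z | scheme_rel f a z 0].

Lemma scheme_relE a u w : scheme_rel f a u w = (u - w \in rel_class a).
Proof. by case: a => [i|] /=; rewrite inE /= ?subr0 // subr_eq0. Qed.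

Lemma rel_class_scale_invariant a : scale_invariant (rel_class a).
Proof.
move=> k z Kk k0; rewrite !inE; case: a => [i|] /=; rewrite ?subr0 mulf_eq0 (negbTE k0) //=.
by rewrite f_scale.
Qed.

Lemma card_scheme_path a b u v :
  #|[set w | scheme_rel f a u w && scheme_rel f b w v]|
    = #|add_fibre (rel_class a) (rel_class b) (u - v)|.
Proof.
rewrite -(card_imset _ (subrI u)); apply: eq_card => z; rewrite inE.
apply/imsetP/idP => [[w] | /andP[za zb]].
  by rewrite inE !scheme_relE => /andP[wa wb] ->; rewrite wa opprB addrC addrA subrK.
exists (u - z); last by rewrite opprB addrC subrK.
by rewrite inE !scheme_relE opprB addrC subrK za addrAC zb.
Qed.

Theorem scale_invariant_scheme : sym_assoc_scheme (scheme_index f) (scheme_rel f).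
Proof.
split=> [[i|] _ x y /=|a b c _ _ _ u v u' v'].
- have fN z : f (- z) = f z by rewrite -mulN1r f_scale ?rpredN1 // oppr_eq0 oner_eq0.
  by rewrite -[x - y]opprB oppr_eq0 fN.
- exact: eq_sym.
rewrite !card_scheme_path; case: c => [i|] /=; last by move=> /eqP-> /eqP->; rewrite !subrr.
move=> /andP[x0 /eqP fx] /andP[x'0 /eqP fx'].
have eq_class d : (u - v \in rel_class d) = (u' - v' \in rel_class d).
  rewrite /rel_class !inE; case: d => [j|] /=; rewrite ?subr0 ?x0 ?x'0 ?fx ?fx' //.
  by rewrite (negbTE x0) (negbTE x'0).
apply: card_add_fibre_eq x0 x'0 (eq_class a) (eq_class b); exact: rel_class_scale_invariant.
Qed.

End SubfieldOfIndexTwo.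

Lemma expf_card_pred (F : finFieldType) (x : F) : x != 0 -> x ^+ #|F|.-1 = 1.
Proof.
move=> x0; apply: (mulIf x0); rewrite mul1r -exprSr prednK ?expf_card //.
by apply/card_gt0P; exists 0.
Qed.

Lemma finField_prim_root (F : finFieldType) : exists g : F, (#|F|.-1).-primitive_root g.
Proof.
have /hasP[g _ g_prim] : has (#|F|.-1).-primitive_root (enum (predC1 (0 : F))).
  apply: has_prim_root; rewrite ?enum_uniq -?cardE ?cardC1 //.
    by rewrite -(cardC1 (0 : F)); apply/card_gt0P; exists 1; rewrite !inE oner_eq0.
  by apply/allP => x; rewrite mem_enum !inE => x0; rewrite unity_rootE expf_card_pred.
by exists g.
Qed.

Lemma card_unity_roots_ge (F : finFieldType) d : (d %| #|F|.-1)%N ->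
  (d <= #|[pred x : F | (x ^+ d == 1)%R]|)%N.
Proof.
move=> d_dvd; have [g g_prim] := finField_prim_root F.
have h_prim := dvdn_prim_root g_prim d_dvd; set h := g ^+ _ in h_prim.
have h_inj : injective (fun i : 'I_d => h ^+ i).
  move=> i j /eqP; rewrite (eq_prim_root_expr h_prim) !modn_small // => /eqP.
  exact: val_inj.
rewrite -[X in (X <= _)%N]card_ord -(card_image h_inj); apply/subset_leq_card/subsetP.
by move=> _ /imageP[i _ ->]; rewrite inE -exprM mulnC exprM (prim_expr_order h_prim) expr1n.
Qed.

Lemma frobenius_fixed_divring_closed (F : fieldType) p n : p \in [pchar F] ->
  divring_closed [pred x : F | x ^+ (p ^ n) == x].
Proof.
move=> pchF; have pnat_q : [pchar F].-nat (p ^ n)%N.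
  by rewrite pnatX (pnatE _ (pcharf_prime pchF)) pchF.
split=> [|x y|x y]; rewrite !inE ?expr1n // => /eqP xq /eqP yq.
  by rewrite exprDn_pchar // exprNn_pchar // xq yq.
by rewrite exprMn exprVn xq yq.
Qed.

Lemma card_frobenius_fixed_ge (F : finFieldType) Q : (1 < Q)%N -> #|F| = (Q ^ 2)%N ->
  (Q <= #|[pred x : F | (x ^+ Q == x)%R]|)%N.
Proof.
case: Q => // Q Q_gt0 cardF; rewrite (cardD1 0) !inE expr0n /= eqxx add1n ltnS.
have Q_dvd : (Q %| #|F|.-1)%N by rewrite cardF -subn1 (subn_sqr _ 1) subn1 dvdn_mulr.
apply: leq_trans (card_unity_roots_ge Q_dvd) (subset_leq_card _).
apply/subsetP => x; rewrite !inE => /eqP xQ1.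
have x0 : x != 0.
  by apply: contra_eq_neq xQ1 => ->; rewrite expr0n gtn_eqF // eq_sym oner_eq0.
by rewrite x0 /= exprS xQ1 mulr1.
Qed.

Lemma frobenius_fixed_expr_scale (R : idomainType) Q N (k z : R) :
  (0 < Q)%N -> (N %| Q + 1)%N -> k ^+ Q = k -> k != 0 ->
  (k * z) ^+ ((Q ^ 2 - 1) %/ N) = z ^+ ((Q ^ 2 - 1) %/ N).
Proof.
move=> Q_gt0 N_dvd kQ k0.
have kQ1 : k ^+ (Q - 1) = 1 by apply: (mulIf k0); rewrite mul1r -exprSr subn1 prednK ?kQ.
by rewrite (subn_sqr _ 1) -muln_divA // exprMn exprM kQ1 expr1n mul1r.
Qed.

Lemma abs_trace_prime_power_root (F : finFieldType) p r m (y : F) :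
  prime r -> (0 < m)%N -> primitive_root_mod p (r ^ m) -> y ^+ (r ^ m) = 1 ->
  abs_trace p (totient (r ^ m)) y
    = (if y == 1 then (r ^ m)%:R else 0) - (if y ^+ r == 1 then (r ^ m.-1)%:R else 0).
Proof.
move=> r_prime m_gt0 p_prim yN.
have r_gt0 := prime_gt0 r_prime.
have NE : (r ^ m = r * r ^ m.-1)%N by rewrite -expnS prednK.
have N_gt0 : (0 < r ^ m)%N by rewrite expn_gt0 r_gt0.
rewrite /abs_trace; under eq_bigr do rewrite -(expr_mod _ yN).
rewrite (sum_primitive_root_mod (fun u => y ^+ u) N_gt0 p_prim) /=.
under eq_bigl do rewrite coprime_pexpr // coprime_sym prime_coprime //.
have sum_mult : \sum_(u < r ^ m | (r %| u)%N) y ^+ u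
    = if y ^+ r == 1 then (r ^ m.-1)%:R else 0.
  rewrite sum_ord_dvdn ?dvdn_exp // NE mulKn //.
  under eq_bigr do rewrite exprM.
  by rewrite sum_expr_unity_root // -exprM -NE.
have sum_split : \sum_(u < r ^ m) y ^+ u
    = \sum_(u < r ^ m | (r %| u)%N) y ^+ u + \sum_(u < r ^ m | ~~ (r %| u)%N) y ^+ u.
  exact: bigID.
rewrite sum_expr_unity_root // sum_mult in sum_split.
by rewrite sum_split addrAC subrr add0r.
Qed.

Section TraceImage.

Variables (F : finFieldType) (p r m e : nat).
Hypotheses (r_prime : prime r) (m_gt0 : (0 < m)%N)
  (p_prim : primitive_root_mod p (r ^ m)) (e_mul : (e * r ^ m)%N = #|F|.-1).

Let f (x : F) := abs_trace p (totient (r ^ m)) (x ^+ e).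
Let a : F := (r ^ m.-1)%:R.

Lemma unity_root_expr (x : F) : x != 0 -> (x ^+ e) ^+ (r ^ m) = 1.
Proof. by move=> x0; rewrite -exprM e_mul expf_card_pred. Qed.

Lemma trace_exprE (x : F) : x != 0 ->
  f x = (if x ^+ e == 1 then (r ^ m)%:R else 0) - (if x ^+ e ^+ r == 1 then a else 0).
Proof. by move=> x0; rewrite /f abs_trace_prime_power_root ?unity_root_expr. Qed.

Lemma image_nonzero_trace_values t : t \in image_nonzero f ->
  [|| t == (r ^ m)%:R - a, t == - a | (1 < m)%N && (t == 0)].
Proof.
case/imsetP=> x; rewrite inE => x0 ->; rewrite trace_exprE //.
have [-> | y1] := eqVneq (x ^+ e) 1; first by rewrite expr1n !eqxx.
have [_ | yr1] := eqVneq (x ^+ e ^+ r) 1; first by rewrite sub0r eqxx orbT.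
rewrite subr0 eqxx andbT; apply/orP; right; apply/orP; right.
rewrite ltn_neqAle m_gt0 andbT; apply: contraNneq yr1 => m1.
by rewrite -{1}(expn1 r) m1 unity_root_expr.
Qed.

Lemma image_nonzero_trace_attained t :
  [|| t == (r ^ m)%:R - a, t == - a | (1 < m)%N && (t == 0)] -> t \in image_nonzero f.
Proof.
have N_gt0 : (0 < r ^ m)%N by rewrite expn_gt0 prime_gt0.
have [g g_prim] := finField_prim_root F.
have g0 : g != 0 by rewrite (prim_root_eq0 g_prim) -lt0n (prim_order_gt0 g_prim).
have h_prim : (r ^ m).-primitive_root (g ^+ e).
  rewrite -(mulnK e N_gt0) e_mul; apply: (dvdn_prim_root g_prim).
  by rewrite -e_mul dvdn_mull.
case/or3P => [/eqP->|/eqP->|/andP[m_gt1 /eqP->]]; apply/imsetP.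
- by exists 1; rewrite ?inE ?oner_eq0 // trace_exprE ?oner_eq0 // !expr1n eqxx.
- exists (g ^+ (r ^ m.-1)); first by rewrite inE expf_neq0.
  have NE : (r ^ m = r ^ m.-1 * r)%N by rewrite -expnSr prednK.
  rewrite trace_exprE ?expf_neq0 // exprAC; set h := g ^+ e in h_prim *.
  rewrite -exprM -NE (prim_expr_order h_prim) eqxx -(prim_order_dvd h_prim).
  rewrite gtnNdvd ?sub0r // ?expn_gt0 ?prime_gt0 //.
  by rewrite NE ltn_Pmulr ?prime_gt1 ?expn_gt0 ?prime_gt0.
- exists g; rewrite ?inE // trace_exprE //; set h := g ^+ e in h_prim *.
  have r_lt : (r < r ^ m)%N by rewrite -{1}(expn1 r) ltn_exp2l // prime_gt1.
  rewrite -[h]expr1 -exprM mul1n -!(prim_order_dvd h_prim).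
  by rewrite !gtnNdvd ?subrr ?(prime_gt0 r_prime) ?(ltn_trans (prime_gt1 r_prime) r_lt).
Qed.

Lemma mem_image_nonzero_trace t :
  (t \in image_nonzero f) = [|| t == (r ^ m)%:R - a, t == - a | (1 < m)%N && (t == 0)].
Proof.
by apply/idP/idP => [/image_nonzero_trace_values|/image_nonzero_trace_attained].
Qed.

Lemma card_image_nonzero_trace : p \in [pchar F] ->
  #|image_nonzero f| = (if (1 < m) && (r != 1 %[mod p]) then 3 else 2)%N.
Proof.
move=> pchF.
have co_pr : coprime p r by case: p_prim => + _; rewrite coprime_pexpr.
have r_pow_neq0 k : (r ^ k)%:R != 0 :> F.
  by rewrite -(dvdn_pcharf pchF) -prime_coprime ?coprimeXr // (pcharf_prime pchF).
have Na_neq0 : - a != 0 by rewrite oppr_eq0 r_pow_neq0.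
have values_neq : (r ^ m)%:R - a != - a by rewrite -subr_eq0 opprK subrK r_pow_neq0.
have first_value_eq0 : ((r ^ m)%:R - a == 0) = (r == 1 %[mod p])%N.
  rewrite eqn_mod_dvd ?prime_gt0 // -natrB; last by rewrite leq_pexp2l ?prime_gt0 ?leq_pred.
  rewrite -(dvdn_pcharf pchF) -{1}(prednK m_gt0) expnS -{2}(mul1n (r ^ m.-1)%N) -mulnBl.
  by rewrite Gauss_dvdl // coprimeXr.
have imE : image_nonzero f = [set t | [|| t == (r ^ m)%:R - a, t == - a | (1 < m)%N && (t == 0)]].
  by apply/setP => t; rewrite inE mem_image_nonzero_trace.
rewrite imE; case: (ltnP 1 m) => [m_gt1|m_le1] /=.
  have -> : [set t | [|| t == (r ^ m)%:R - a, t == - a | t == 0]] = (r ^ m)%:R - a |: [set - a; 0].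
    by apply/setP => t; rewrite !inE orbA.
  rewrite cardsU1 cards2 !inE Na_neq0 negb_or values_neq first_value_eq0.
  by case: (r == 1 %[mod p])%N.
have -> : [set t | [|| t == (r ^ m)%:R - a, t == - a | false]] = [set (r ^ m)%:R - a; - a].
  by apply/setP => t; rewrite !inE orbF.
by rewrite cards2 values_neq.
Qed.

End TraceImage.

Theorem proposition4p6 (m r p : nat) (F : finFieldType) :
  (0 < m)%N -> prime r -> odd r -> prime p -> (3 <= p)%N ->
  primitive_root_mod p (r ^ m) ->
  p \in [pchar F] ->
  #|F| = (p ^ totient (r ^ m))%N ->
  let q := (p ^ totient (r ^ m))%N in
  let f := fun x : F => abs_trace p (totient (r ^ m)) (x ^+ ((q - 1) %/ r ^ m)) in
  ((induces_dclass_scheme f 2 <-> #|image_nonzero f| = 2%N) /\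
   (#|image_nonzero f| = 2%N <-> (m = 1%N \/ (r = 1 %[mod p])%N))) /\
  ((induces_dclass_scheme f 3 <-> #|image_nonzero f| = 3%N) /\
   (#|image_nonzero f| = 3%N <-> ((1 < m)%N /\ (r != 1 %[mod p])%N))).
Proof.
move=> m_gt0 r_prime r_odd p_prime _ p_prim pchF cardF q f.
set Q := (p ^ (totient (r ^ m))./2)%N.
have qE : q = (Q ^ 2)%N by rewrite /q -double_half_totient // -muln2 expnM.
have Q_gt1 : (1 < Q)%N by rewrite -{1}(expn0 p) ltn_exp2l ?prime_gt1 ?half_totient_gt0.
have QN_dvd := primitive_root_half_totient r_prime r_odd m_gt0 p_prim.
pose K := [pred x : F | x ^+ Q == x].
have card_F_le : (#|F| <= #|K| ^ 2)%N.
  by rewrite cardF -/q qE leq_exp2r // card_frobenius_fixed_ge // cardF.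
have f_scale k z : k \in K -> k != 0 -> f (k * z) = f z.
  by move=> /eqP kQ k0; rewrite /f qE frobenius_fixed_expr_scale // ltnW.
have scheme := scale_invariant_scheme (frobenius_fixed_divring_closed _ pchF) card_F_le f_scale.
have e_mul : ((q - 1) %/ r ^ m * r ^ m)%N = #|F|.-1.
  by rewrite divnK ?cardF -?subn1 // qE (subn_sqr _ 1) dvdn_mull.
have card_im : #|image_nonzero f| = (if (1 < m) && (r != 1 %[mod p]) then 3 else 2)%N :=
  card_image_nonzero_trace r_prime m_gt0 p_prim e_mul pchF.
have m1E : (m = 1)%N <-> ~~ (1 < m)%N.
  by rewrite -leqNgt; split=> [->|m_le1] //; apply/anti_leq; rewrite m_le1 m_gt0.
have scheme_iff d : induces_dclass_scheme f d <-> #|image_nonzero f| = d.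
  by split=> [[_ <-] | <-]; last split.
rewrite !scheme_iff card_im m1E.
case: (1 < m)%N; case: eqP => r1 /=; do !split=> //.
all: by [right | case | left | case=> // /r1].
Qed.
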